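(* Let $N_1,N_3,J,L\in\mathbb{N}$ and let $\hat{\mathcal{X}}\in\mathbb{R}^{N_1\times J\times N_3\times L}$ be a real fourth-order tensor with slices $\hat{\mathcal{X}}_{jl}\in\mathbb{R}^{N_1\times N_3}$ given by $(\hat{\mathcal{X}}_{jl})_{ik}=\hat{\mathcal{X}}_{ijkl}$. Consider all factorizations $\hat{\mathcal{X}}_{jl}=\mathbf{U}(\mathbf{R}_j\mathbf{T}_l)\mathbf{V}^\top$ for all $j=1,\dots,J$, $l=1,\dots,L$, where $D\in\mathbb{N}$ is arbitrary, $\mathbf{U}\in\mathbb{R}^{N_1\times D}$, $\mathbf{V}\in\mathbb{R}^{N_3\times D}$, and $\mathbf{R}_j,\mathbf{T}_l\in\mathbb{R}^{D\times D}$ are real diagonal matrices. Then $$\|\hat{\mathcal{X}}\|_*=\min_{\substack{D,\ \mathbf{U},\mathbf{V},(\mathbf{R}_j),(\mathbf{T}_l):\\ \hat{\mathcal{X}}_{jl}=\mathbf{U}(\mathbf{R}_j\mathbf{T}_l)\mathbf{V}^\top\ \forall j,l}}\ \frac{1}{4\sqrt{JL}}\sum_{l=1}^{L}\sum_{j=1}^{J}\Big(\|\mathbf{U}\mathbf{R}_j\mathbf{T}_l\|_F^2+\|\mathbf{V}\|_F^2+\|\mathbf{V}(\mathbf{R}_j\mathbf{T}_l)^\top\|_F^2+\|\mathbf{U}\|_F^2\Big).$$ Moreover, every factorization attaining this minimum satisfies, for every $d\in\{1,\dots,D\}$, $$\|\mathbf{u}_{:d}\|_2\|\mathbf{r}_{:d}\|_2\|\mathbf{t}_{:d}\|_2=\sqrt{JL}\,\|\mathbf{v}_{:d}\|_2\quad\text{and}\quad\|\mathbf{v}_{:d}\|_2\|\mathbf{r}_{:d}\|_2\|\mathbf{t}_{:d}\|_2=\sqrt{JL}\,\|\mathbf{u}_{:d}\|_2,$$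 where $\mathbf{u}_{:d},\mathbf{v}_{:d}$ are the $d$-th columns of $\mathbf{U},\mathbf{V}$, $\mathbf{r}_{:d}\in\mathbb{R}^J$ is the $d$-th column of $\widetilde{\mathbf{R}}\in\mathbb{R}^{J\times D}$ with $\widetilde{\mathbf{R}}(j,d)=\mathbf{R}_j(d,d)$, and $\mathbf{t}_{:d}\in\mathbb{R}^L$ is the $d$-th column of $\widetilde{\mathbf{T}}\in\mathbb{R}^{L\times D}$ with $\widetilde{\mathbf{T}}(l,d)=\mathbf{T}_l(d,d)$.
   Context: $\|\cdot\|_F$ is the Frobenius norm and $\|\cdot\|_2$ the Euclidean norm. The tensor nuclear 2-norm of a real tensor $\mathcal{A}\in\mathbb{R}^{n_1}\otimes\mathbb{R}^{n_2}\otimes\mathbb{R}^{n_3}\otimes\mathbb{R}^{n_4}$ is $\|\mathcal{A}\|_*=\min\big\{\sum_{i=1}^r\prod_{k=1}^4\|\mathbf{a}_{k,i}\|_2:\ \mathcal{A}=\sum_{i=1}^r\mathbf{a}_{1,i}\otimes\mathbf{a}_{2,i}\otimes\mathbf{a}_{3,i}\otimes\mathbf{a}_{4,i},\ r\in\mathbb{N},\ \mathbf{a}_{k,i}\in\mathbb{R}^{n_k}\big\}$, where $\otimes$ is the outer product. The factorization condition is equivalent to $\hat{\mathcal{X}}=\sum_{d=1}^D\mathbf{u}_{:d}\otimes\mathbf{r}_{:d}\otimes\mathbf{v}_{:d}\otimes\mathbf{t}_{:d}$. *)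

From HB Require Import structures.
From mathcomp Require Import all_boot all_order all_algebra.
From mathcomp Require Import boolp classical_sets reals.
Set Implicit Arguments. Unset Strict Implicit. Unset Printing Implicit Defensive.
Import Order.TTheory GRing.Theory Num.Theory.
Local Open Scope ring_scope.
Local Open Scope classical_set_scope.

Definition tensor4 (R : realType) (N1 J N3 L : nat) :=
  'I_N1 -> 'I_J -> 'I_N3 -> 'I_L -> R.

(* Frobenius norm of a matrix (for column vectors: the Euclidean norm). *)
Definition frob {R : realType} {m n : nat} (A : 'M[R]_(m, n)) : R :=
  Num.sqrt (\sum_(i < m) \sum_(j < n) A i j ^+ 2).

(* Set of costs sum_s prod_k ||a_{k,s}||_2 of all rank-one decompositions
   X = sum_{s<r} a_{1,s} (x) a_{2,s} (x) a_{3,s} (x) a_{4,s};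
   the vectors a_{k,s} are the s-th columns of A_k. *)
Definition nuc_costs {R : realType} {N1 J N3 L : nat}
  (X : tensor4 R N1 J N3 L) : set R :=
  [set c | exists (r : nat) (A1 : 'M[R]_(N1, r)) (A2 : 'M[R]_(J, r))
             (A3 : 'M[R]_(N3, r)) (A4 : 'M[R]_(L, r)),
     (forall i j k l,
        X i j k l = \sum_(s < r) A1 i s * A2 j s * A3 k s * A4 l s) /\
     c = \sum_(s < r) frob (col s A1) * frob (col s A2)
                      * frob (col s A3) * frob (col s A4)].

Definition nuc_norm {R : realType} {N1 J N3 L : nat}
  (X : tensor4 R N1 J N3 L) : R := inf (nuc_costs X).

Definition slice {R : realType} {N1 J N3 L : nat}
  (X : tensor4 R N1 J N3 L) (j : 'I_J) (l : 'I_L) : 'M[R]_(N1, N3) :=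
  \matrix_(i, k) X i j k l.

Definition diagR {R : realType} {J D : nat} (Rt : 'M[R]_(J, D)) (j : 'I_J)
  : 'M[R]_D := diag_mx (row j Rt).

Definition is_fact {R : realType} {N1 J N3 L D : nat}
  (X : tensor4 R N1 J N3 L) (U : 'M[R]_(N1, D)) (V : 'M[R]_(N3, D))
  (Rt : 'M[R]_(J, D)) (Tt : 'M[R]_(L, D)) : Prop :=
  forall j l, slice X j l = U *m (diagR Rt j *m diagR Tt l) *m V^T.

Definition fact_obj {R : realType} {N1 N3 J L D : nat}
  (U : 'M[R]_(N1, D)) (V : 'M[R]_(N3, D))
  (Rt : 'M[R]_(J, D)) (Tt : 'M[R]_(L, D)) : R :=
  (4 * Num.sqrt ((J * L)%:R))^-1 *
  \sum_(l < L) \sum_(j < J)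
    (frob (U *m (diagR Rt j *m diagR Tt l)) ^+ 2 + frob V ^+ 2
     + frob (V *m (diagR Rt j *m diagR Tt l)^T) ^+ 2 + frob U ^+ 2).

(* By AM-GM the objective dominates the cost sum_d |u_d| |r_d| |v_d| |t_d| of the
   rank-one decomposition X = sum_d u_d (x) r_d (x) v_d (x) t_d it induces: the
   difference is (4 sqrt(JL))^-1 times a sum of squares of the two column-balance
   defects. Conversely, rescaling the columns of any decomposition yields a
   factorization without defect and with the same cost. It remains that the
   nuclear norm is attained. By a Caratheodory argument every decomposition can be
   traded for one with N1 J N3 L terms and no larger cost; once its four column
   norms are equalised its entries are bounded in terms of its cost, so such
   decompositions of bounded cost form a compact set, on which the cost is
   continuous. *)

From HB Require Import structures.
From mathcomp Require Import all_boot all_order all_algebra.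
From mathcomp Require Import boolp classical_sets reals.
From mathcomp Require Import topology normedtype derive realfun matrix_normedtype.
From mathcomp Require Import ring lra.
Import Order.TTheory GRing.Theory Num.Theory.
Import numFieldNormedType.Exports.
Set Implicit Arguments. Unset Strict Implicit. Unset Printing Implicit Defensive.
Local Open Scope ring_scope.

Section ColumnNorms.
Variable R : realType.

Definition colnorm2 m n (A : 'M[R]_(m, n)) (s : 'I_n) : R := \sum_i A i s ^+ 2.

Lemma colnorm2_ge0 m n (A : 'M[R]_(m, n)) s : 0 <= colnorm2 A s.
Proof. by apply: sumr_ge0 => i _; rewrite sqr_ge0. Qed.

Lemma entry_le_colnorm2 m n (A : 'M[R]_(m, n)) i s : A i s ^+ 2 <= colnorm2 A s.
Proof. by rewrite /colnorm2 (bigD1 i) //= lerDl sumr_ge0 // => j _; rewrite sqr_ge0. Qed.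

Lemma frob_ge0 m n (A : 'M[R]_(m, n)) : 0 <= frob A.
Proof. exact: sqrtr_ge0. Qed.

Lemma sqr_frob m n (A : 'M[R]_(m, n)) : frob A ^+ 2 = \sum_s colnorm2 A s.
Proof.
rewrite /frob sqr_sqrtr; first by rewrite exchange_big.
by apply: sumr_ge0 => i _; apply: sumr_ge0 => j _; rewrite sqr_ge0.
Qed.

Lemma frob_colE m n (A : 'M[R]_(m, n)) s : frob (col s A) = Num.sqrt (colnorm2 A s).
Proof. by congr Num.sqrt; apply: eq_bigr => i _; rewrite big_ord1 mxE. Qed.

Lemma sqr_frob_col m n (A : 'M[R]_(m, n)) s : frob (col s A) ^+ 2 = colnorm2 A s.
Proof. by rewrite frob_colE sqr_sqrtr ?colnorm2_ge0. Qed.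

Lemma frob_col_eq0 m n (A : 'M[R]_(m, n)) s : frob (col s A) = 0 -> forall i, A i s = 0.
Proof.
move=> A0 i; apply/eqP; rewrite -sqrf_eq0 eq_le sqr_ge0 andbT.
by rewrite (le_trans (entry_le_colnorm2 A i s)) // -sqr_frob_col A0 expr0n.
Qed.

Lemma frob_col_scale m n (A : 'M[R]_(m, n)) (d : 'rV[R]_n) s :
  frob (col s (A *m diag_mx d)) = frob (col s A) * `|d 0 s|.
Proof.
rewrite !frob_colE -sqrtr_sqr -sqrtrM ?colnorm2_ge0 //; congr Num.sqrt.
by rewrite /colnorm2 mulr_suml; apply: eq_bigr => i _; rewrite mul_mx_diag mxE exprMn.
Qed.

Lemma frob_col_normalize m n (A : 'M[R]_(m, n)) (t : 'I_n -> R) s :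
  0 <= t s -> (frob (col s A) = 0 -> t s = 0) ->
  frob (col s (A *m diag_mx (\row_s' (t s' / frob (col s' A))))) = t s.
Proof.
move=> t_ge0 t0; rewrite frob_col_scale mxE.
have [f0|f_neq0] := eqVneq (frob (col s A)) 0; first by rewrite f0 mul0r t0.
by rewrite ger0_norm ?divr_ge0 ?frob_ge0 // mulrC divfK.
Qed.

Lemma frob_col_mul_empty m n r (A : 'M[R]_(m, r)) (B : 'M[R]_(n, r)) s :
  (m * n = 0)%N -> frob (col s A) * frob (col s B) = 0.
Proof.
have frob_col_empty p (C : 'M[R]_(p, r)) : p = 0%N -> frob (col s C) = 0.
  by move=> p0; subst p; rewrite frob_colE /colnorm2 big_ord0 sqrtr0.
move/eqP; rewrite muln_eq0 => /orP[]/eqP/frob_col_empty->; by rewrite ?mul0r ?mulr0.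
Qed.

End ColumnNorms.

Section RealFacts.
Variable R : realType.

Lemma ler_norm_pow4 (x c : R) : x ^+ 4 <= c -> `|x| <= 1 + c.
Proof.
move=> x4_le; have c_ge0 : 0 <= c by apply: le_trans x4_le; rewrite exprn_even_ge0.
have [x_le1|x_gt1] := lerP `|x| 1; first by rewrite ler_wpDr.
have : `|x| <= x ^+ 4.
  by rewrite -[x ^+ 4]ger0_norm ?exprn_even_ge0 // normrX ler_eXnr // ltW.
lra.
Qed.

Lemma exists_sign r (mu w : 'I_r -> R) :
  (exists s, mu s != 0) -> (forall s, 0 <= w s) ->
  exists e : R, (exists s, 0 < e * mu s) /\ 0 <= e * \sum_s mu s * w s.
Proof.
move=> [s1 mu1_neq0] w_ge0.
have pos_term e : 0 < e * \sum_s mu s * w s -> exists s, 0 < e * mu s.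
  move=> pos; apply/existsP; apply: contraTT pos => /existsPn mu_le0.
  rewrite -leNgt mulr_sumr sumr_le0 // => s _.
  by rewrite mulrA mulr_le0_ge0 // leNgt mu_le0.
case: (ltrgtP (\sum_s mu s * w s) 0) => [neg|pos|->].
- exists (-1); rewrite mulN1r oppr_ge0 ltW //; split=> //.
  by apply: pos_term; rewrite mulN1r oppr_gt0.
- by exists 1; rewrite mul1r ltW //; split=> //; apply: pos_term; rewrite mul1r.
exists (if 0 < mu s1 then 1 else -1); rewrite mulr0; split=> //; exists s1.
by case: (ltrgtP (mu s1) 0) mu1_neq0 => // mu1 _ /=; rewrite ?mul1r // mulN1r oppr_gt0.
Qed.

Lemma caratheodory_weights r (mu w : 'I_r -> R) :
  (exists s, mu s != 0) -> (forall s, 0 <= w s) ->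
  exists (s0 : 'I_r) (k : R),
    [/\ k * mu s0 = 1, forall s, k * mu s <= 1 & 0 <= k * \sum_s mu s * w s].
Proof.
move=> mu_neq0 w_ge0; have [e [[s1 pos1] sum_ge0]] := exists_sign mu_neq0 w_ge0.
have [s0 _ max_s0] := @arg_maxP _ _ _ s1 xpredT (fun s => e * mu s) isT.
have pos0 : 0 < e * mu s0 := lt_le_trans pos1 (max_s0 s1 isT).
exists s0, (e / (e * mu s0)); split.
- by rewrite mulrAC mulfV ?gt_eqF.
- by move=> s; rewrite mulrAC ler_pdivrMr // mul1r; apply: max_s0.
- by rewrite mulrAC divr_ge0 // ltW.
Qed.

End RealFacts.

Lemma exists_left_kernel (F : fieldType) m n (M : 'M[F]_(m, n)) :
  (n < m)%N -> exists2 v : 'rV_m, v != 0 & v *m M = 0.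
Proof.
move=> lt_nm; have : kermx M != 0.
  by rewrite kermx_eq0 /row_free ltn_eqF // (leq_ltn_trans (rank_leq_col M) lt_nm).
by case/rowV0Pn => v /sub_kermxP vM v_neq0; exists v.
Qed.

Section Continuity.
Context {R : realType} {T : topologicalType}.
Local Open Scope classical_set_scope.

Lemma continuous_sum (I : Type) (r : seq I) (F : I -> T -> R) :
  (forall i, continuous (F i)) -> continuous (fun t => \sum_(i <- r) F i t).
Proof. by move=> cF; apply: continuous_big => [|i _]; [exact: add_continuous | exact: cF]. Qed.

Lemma continuous_mul (f g : T -> R) :
  continuous f -> continuous g -> continuous (fun t => f t * g t).
Proof. by move=> cf cg t; exact: (continuousM (cf t) (cg t)). Qed.

Lemma continuous_frob_col m n (F : T -> 'M[R]_(m, n)) s :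
  (forall i, continuous (fun t => F t i s)) -> continuous (fun t => frob (col s (F t))).
Proof.
move=> cF; rewrite (_ : (fun t => _) = Num.sqrt \o (fun t => colnorm2 (F t) s)).
  move=> t; apply: continuous_comp; last exact: sqrt_continuous.
  by apply: continuous_sum => i; apply: continuous_mul; apply: cF.
by apply/funext => t; rewrite /= frob_colE.
Qed.

Lemma closed_forall (I : Type) (P : I -> set T) :
  (forall i, closed (P i)) -> closed [set t | forall i, P i t].
Proof.
move=> cP; rewrite (_ : [set t | _] = \bigcap_(i in setT) P i); first exact: closed_bigI.
by apply/seteqP; split=> t /= Pt i //; apply: Pt.
Qed.

Lemma closed_fun_eq (f : T -> R) (c : R) : continuous f -> closed [set t | c = f t].
Proof.
move=> cf; rewrite (_ : [set t | _] = f @^-1` [set c]).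
  by apply: preimage_closed => [t _|]; [apply: cf | apply: closed_eq].
by apply/seteqP; split=> t /= ->.
Qed.

End Continuity.

Section CPDecompositions.
Variables (R : realType) (N1 J N3 L : nat) (X : tensor4 R N1 J N3 L).

Record cpd (r : nat) := CPD {
  cp1 : 'M[R]_(N1, r); cp2 : 'M[R]_(J, r); cp3 : 'M[R]_(N3, r); cp4 : 'M[R]_(L, r) }.

Definition cpd_term r (A : cpd r) s i j k l : R :=
  cp1 A i s * cp2 A j s * cp3 A k s * cp4 A l s.

Definition decomp r (A : cpd r) :=
  forall i j k l, X i j k l = \sum_s cpd_term A s i j k l.

Definition weight r (A : cpd r) s : R :=
  frob (col s (cp1 A)) * frob (col s (cp2 A)) * frob (col s (cp3 A)) * frob (col s (cp4 A)).

Definition cost r (A : cpd r) : R := \sum_s weight A s.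

Lemma weight_ge0 r (A : cpd r) s : 0 <= weight A s.
Proof. by rewrite !mulr_ge0 ?frob_ge0. Qed.

Lemma cost_ge0 r (A : cpd r) : 0 <= cost A.
Proof. by apply: sumr_ge0 => s _; apply: weight_ge0. Qed.

Lemma cpd_term_eq0 r (A : cpd r) s i j k l : weight A s = 0 -> cpd_term A s i j k l = 0.
Proof.
rewrite /cpd_term => /eqP; rewrite !mulf_eq0 -!orbA => /or4P[] /eqP/frob_col_eq0->;
  by rewrite !(mulr0, mul0r).
Qed.

Lemma weight_JL0 r (A : cpd r) s : (J * L = 0)%N -> weight A s = 0.
Proof.
move=> JL0; rewrite /weight mulrAC -[_ * _ * frob (col s (cp4 A))]mulrA.
by rewrite (frob_col_mul_empty _ _ _ JL0) mulr0 !mul0r.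
Qed.

Lemma nuc_costsP c : nuc_costs X c <-> exists r (A : cpd r), decomp A /\ c = cost A.
Proof.
split=> [[r [A1 [A2 [A3 [A4 [dA ->]]]]]]|[r [[A1 A2 A3 A4] [dA ->]]]].
  by exists r, (CPD A1 A2 A3 A4).
by exists r, A1, A2, A3, A4.
Qed.

Local Notation rk := #|{: 'I_N1 * 'I_J * 'I_N3 * 'I_L}|.

Lemma exists_decomp : exists A : cpd rk, decomp A.
Proof.
pose e (s : 'I_rk) : 'I_N1 * 'I_J * 'I_N3 * 'I_L := enum_val s.
exists (CPD
  (\matrix_(i, s) ((i == (e s).1.1.1)%:R * X (e s).1.1.1 (e s).1.1.2 (e s).1.2 (e s).2))
  (\matrix_(j, s) (j == (e s).1.1.2)%:R) (\matrix_(k, s) (k == (e s).1.2)%:R)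
  (\matrix_(l, s) (l == (e s).2)%:R)).
move=> i j k l; rewrite (bigD1 (enum_rank (i, j, k, l))) //= big1 ?addr0.
  by rewrite /cpd_term !mxE /e enum_rankK /= !eqxx !mulr1 mul1r.
move=> s ne; have : e s != (i, j, k, l) by rewrite /e -(inj_eq enum_rank_inj) enum_valK.
rewrite /cpd_term !mxE; case: (e s) => [[[a b] c] d] /= abcd.
have [ia|_] := eqVneq i a; last by rewrite !mul0r.
have [jb|_] := eqVneq j b; last by rewrite mulr0 !mul0r.
have [kc|_] := eqVneq k c; last by rewrite mulr0 mul0r.
have [ld|_] := eqVneq l d; last by rewrite mulr0.
by rewrite ia jb kc ld eqxx in abcd.
Qed.

Lemma nuc_norm_le r (A : cpd r) : decomp A -> nuc_norm X <= cost A.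
Proof.
move=> dA; apply: ge_inf; last by apply/nuc_costsP; exists r, A.
by exists 0 => _ /nuc_costsP[? [B [_ ->]]]; apply: cost_ge0.
Qed.

Lemma nuc_norm_ge c : (forall r (A : cpd r), decomp A -> c <= cost A) -> c <= nuc_norm X.
Proof.
move=> lbc; apply: lb_le_inf => [|_ /nuc_costsP[r [A [dA ->]]]]; last exact: lbc.
by have [A dA] := exists_decomp; exists (cost A); apply/nuc_costsP; exists rk, A.
Qed.

Definition cpd_scale r (A : cpd r) (c1 c2 c3 c4 : 'I_r -> R) : cpd r :=
  CPD (cp1 A *m diag_mx (\row_s c1 s)) (cp2 A *m diag_mx (\row_s c2 s))
      (cp3 A *m diag_mx (\row_s c3 s)) (cp4 A *m diag_mx (\row_s c4 s)).

Lemma cpd_term_scale r (A : cpd r) c1 c2 c3 c4 s i j k l :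
  cpd_term (cpd_scale A c1 c2 c3 c4) s i j k l
  = c1 s * c2 s * c3 s * c4 s * cpd_term A s i j k l.
Proof. by rewrite /cpd_term /= !mul_mx_diag !mxE; ring. Qed.

Lemma weight_scale r (A : cpd r) c1 c2 c3 c4 s :
  weight (cpd_scale A c1 c2 c3 c4) s = `|c1 s * c2 s * c3 s * c4 s| * weight A s.
Proof. by rewrite /weight /= !frob_col_scale !mxE !normrM; ring. Qed.

Definition cpd_drop r (A : cpd r.+1) (s0 : 'I_r.+1) : cpd r :=
  CPD (col' s0 (cp1 A)) (col' s0 (cp2 A)) (col' s0 (cp3 A)) (col' s0 (cp4 A)).

Lemma frob_col_col' n r (B : 'M[R]_(n, r.+1)) s0 s :
  frob (col s (col' s0 B)) = frob (col (lift s0 s) B).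
Proof.
by rewrite !frob_colE /colnorm2; congr Num.sqrt; apply: eq_bigr => i _; rewrite mxE.
Qed.

Lemma decomp_drop r (A : cpd r.+1) s0 : decomp A -> weight A s0 = 0 ->
  decomp (cpd_drop A s0) /\ cost (cpd_drop A s0) = cost A.
Proof.
move=> dA w0; split=> [i j k l|]; last first.
  rewrite /cost [RHS](bigD1_ord s0) //= w0 add0r.
  by apply: eq_bigr => s _; rewrite /weight /= !frob_col_col'.
rewrite dA (bigD1_ord s0) //= cpd_term_eq0 // add0r.
by apply: eq_bigr => s _; rewrite /cpd_term !mxE.
Qed.

Definition zext r r' (F : 'I_r -> R) (s : 'I_r') : R := oapp F 0 (insub (val s)).

Lemma sum_zext r r' (F : 'I_r -> R) : (r <= r')%N -> \sum_(s < r') zext F s = \sum_s F s.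
Proof.
move=> le_rr'; pose G n := oapp F 0 (insub n).
have -> : \sum_(s < r) F s = \sum_(s < r) G s by apply: eq_bigr => s _; rewrite /G valK.
rewrite (big_ord_widen r' G le_rr') [RHS]big_mkcond; apply: eq_bigr => s _.
by rewrite /zext -/(G s) /G; case: ltnP => // s_ge; rewrite insubN // -leqNgt.
Qed.

Lemma frob_col_pad n r r' (B : 'M[R]_(n, r)) s :
  frob (col s (\matrix_(i, s') zext (B i) s' : 'M_(n, r'))) = zext (fun t => frob (col t B)) s.
Proof.
rewrite frob_colE /colnorm2 (eq_bigr (fun i => zext (B i) s ^+ 2)) => [|i _]; last first.
  by rewrite mxE.
rewrite /zext; case: insub => [t|] /=; first by rewrite frob_colE.
by rewrite big1 ?sqrtr0 // => i _; rewrite expr0n.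
Qed.

Definition cpd_pad r r' (A : cpd r) : cpd r' :=
  CPD (\matrix_(i, s) zext (cp1 A i) s) (\matrix_(j, s) zext (cp2 A j) s)
      (\matrix_(k, s) zext (cp3 A k) s) (\matrix_(l, s) zext (cp4 A l) s).

Lemma decomp_pad r r' (A : cpd r) : (r <= r')%N -> decomp A ->
  decomp (cpd_pad r' A) /\ cost (cpd_pad r' A) = cost A.
Proof.
move=> le_rr' dA; split=> [i j k l|]; rewrite ?dA /cost -(sum_zext _ le_rr');
  apply: eq_bigr => s _.
  by rewrite /cpd_term !mxE /zext; case: insub => [t|] /=; rewrite ?mul0r.
by rewrite /weight /= !frob_col_pad /zext; case: insub => [t|] /=; rewrite ?mul0r.
Qed.

Lemma decomp_rescale r (A : cpd r) (a b : 'I_r -> R) :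
  decomp A -> (forall s, 0 <= a s) -> (forall s, 0 <= b s) ->
  (forall s, (a s * b s) ^+ 2 = weight A s) -> (forall s, (a s == 0) = (b s == 0)) ->
  exists B : cpd r, [/\ decomp B, cost B = cost A &
    forall s, [/\ frob (col s (cp1 B)) = a s, frob (col s (cp2 B)) = b s,
                  frob (col s (cp3 B)) = a s & frob (col s (cp4 B)) = b s]].
Proof.
move=> dA a_ge0 b_ge0 abw ab0.
have ab_eq0 s : weight A s = 0 -> a s = 0 /\ b s = 0.
  move=> /eqP; rewrite -abw sqrf_eq0 mulf_eq0 -ab0 orbb => /eqP a0.
  by split; last apply/eqP; rewrite -?ab0 a0.
have col0_ab0 s : [|| frob (col s (cp1 A)) == 0, frob (col s (cp2 A)) == 0,
                      frob (col s (cp3 A)) == 0 | frob (col s (cp4 A)) == 0] ->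
    a s = 0 /\ b s = 0.
  by move=> f0; apply: ab_eq0; apply/eqP; rewrite !mulf_eq0 -!orbA.
pose ratio n (M : 'M[R]_(n, r)) (t : 'I_r -> R) s := t s / frob (col s M).
pose B := cpd_scale A (ratio _ (cp1 A) a) (ratio _ (cp2 A) b)
                      (ratio _ (cp3 A) a) (ratio _ (cp4 A) b).
have normsB s : [/\ frob (col s (cp1 B)) = a s, frob (col s (cp2 B)) = b s,
                    frob (col s (cp3 B)) = a s & frob (col s (cp4 B)) = b s].
  by split; apply: frob_col_normalize => // /eqP f0; have [] := col0_ab0 s; rewrite ?f0 ?orbT.
exists B; split=> //; last first.
  by apply: eq_bigr => s _; rewrite -abw /weight; have [-> -> -> ->] := normsB s; ring.
move=> i j k l; rewrite dA; apply: eq_bigr => s _; rewrite cpd_term_scale.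
have [w0|w_neq0] := eqVneq (weight A s) 0; first by rewrite cpd_term_eq0 ?mulr0.
suff -> : ratio _ (cp1 A) a s * ratio _ (cp2 A) b s * ratio _ (cp3 A) a s
          * ratio _ (cp4 A) b s = 1 by rewrite mul1r.
by rewrite /ratio -[1](mulfV w_neq0) -{1}abw /weight !invfM; ring.
Qed.

Lemma weight_le_cost r (A : cpd r) s : weight A s <= cost A.
Proof. by rewrite /cost (bigD1 s) //= lerDl sumr_ge0 // => t _; apply: weight_ge0. Qed.

Local Notation slot r := (('I_N1 + 'I_J + 'I_N3 + 'I_L) * 'I_r)%type.

Definition cpd_entry r (A : cpd r) (x : slot r) : R :=
  match x with
  | (inl (inl (inl i)), s) => cp1 A i s
  | (inl (inl (inr j)), s) => cp2 A j s
  | (inl (inr k), s) => cp3 A k s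
  | (inr l, s) => cp4 A l s
  end.

Lemma decomp_balance r (A : cpd r) : decomp A ->
  exists B : cpd r, [/\ decomp B, cost B = cost A & forall x, cpd_entry B x ^+ 4 <= cost B].
Proof.
move=> dA; pose rho s := Num.sqrt (Num.sqrt (weight A s)).
have rho_ge0 s : 0 <= rho s by apply: sqrtr_ge0.
have rho4 s : (rho s * rho s) ^+ 2 = weight A s.
  by rewrite -expr2 !sqr_sqrtr ?sqrtr_ge0 ?weight_ge0.
have [B [dB costB normsB]] := decomp_rescale dA rho_ge0 rho_ge0 rho4 (fun=> erefl).
exists B; split=> // x; rewrite costB.
have entry_le n (M : 'M[R]_(n, r)) i s : frob (col s M) = rho s -> M i s ^+ 4 <= cost A.
  move=> Ms; apply: le_trans (weight_le_cost A s); rewrite -rho4 -[4%N]/(2 * 2)%N exprM.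
  rewrite ler_sqr ?nnegrE ?sqr_ge0 ?mulr_ge0 // -expr2 -Ms sqr_frob_col.
  exact: entry_le_colnorm2.
by case: x => [[[[i|j]|k]|l] s] /=; apply: entry_le; have [] := normsB s.
Qed.

Local Notation S := (Num.sqrt (J * L)%:R : R).

Lemma diagR_mul D (Rt : 'M[R]_(J, D)) (Tt : 'M[R]_(L, D)) j l :
  diagR Rt j *m diagR Tt l = diag_mx (\row_d (Rt j d * Tt l d)).
Proof. by rewrite /diagR mulmx_diag; congr diag_mx; apply/rowP => d; rewrite !mxE. Qed.

Lemma fact_mxE D (U : 'M[R]_(N1, D)) (V : 'M[R]_(N3, D)) Rt Tt j l i k :
  (U *m (diagR Rt j *m diagR Tt l) *m V^T) i k = \sum_d cpd_term (CPD U Rt V Tt) d i j k l.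
Proof.
rewrite diagR_mul mul_mx_diag mxE; apply: eq_bigr => d _.
by rewrite /cpd_term !mxE /=; ring.
Qed.

Lemma is_factE D (U : 'M[R]_(N1, D)) (V : 'M[R]_(N3, D))
    (Rt : 'M[R]_(J, D)) (Tt : 'M[R]_(L, D)) :
  is_fact X U V Rt Tt <-> decomp (CPD U Rt V Tt).
Proof.
split=> [fUV i j k l|dA j l]; last by apply/matrixP => i k; rewrite fact_mxE mxE dA.
by have /matrixP/(_ i k) := fUV j l; rewrite mxE fact_mxE.
Qed.

Lemma sum_sqr_frob_diag n D (M : 'M[R]_(n, D)) (Rt : 'M[R]_(J, D)) (Tt : 'M[R]_(L, D)) :
  \sum_(l < L) \sum_(j < J) frob (M *m diag_mx (\row_d (Rt j d * Tt l d))) ^+ 2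
  = \sum_d colnorm2 M d * colnorm2 Rt d * colnorm2 Tt d.
Proof.
under eq_bigr do under eq_bigr do rewrite sqr_frob.
rewrite exchange_big /=; under eq_bigr do rewrite exchange_big /=.
rewrite exchange_big /=; apply: eq_bigr => d _.
rewrite /colnorm2 -mulrA big_distrlr /= mulr_sumr.
apply: eq_bigr => j _; rewrite mulr_sumr; apply: eq_bigr => l _.
by rewrite /colnorm2 mulr_suml; apply: eq_bigr => i _; rewrite mul_mx_diag !mxE; ring.
Qed.

Lemma sqrtJL_eq0 : (S == 0) = (J * L == 0)%N.
Proof. by rewrite sqrtr_eq0 lern0. Qed.

Lemma fact_obj_colnorms D (U : 'M[R]_(N1, D)) (V : 'M[R]_(N3, D))
    (Rt : 'M[R]_(J, D)) (Tt : 'M[R]_(L, D)) :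
  fact_obj U V Rt Tt = (4 * S)^-1 *
    \sum_d (colnorm2 U d * colnorm2 Rt d * colnorm2 Tt d + (J * L)%:R * colnorm2 V d
            + colnorm2 V d * colnorm2 Rt d * colnorm2 Tt d + (J * L)%:R * colnorm2 U d).
Proof.
have sum_const (x : R) : \sum_(l < L) \sum_(j < J) x = (J * L)%:R * x.
  by rewrite !sumr_const !card_ord -mulrnA mulr_natl mulnC.
rewrite /fact_obj; congr (_ * _).
under eq_bigr do under eq_bigr do rewrite diagR_mul tr_diag_mx.
under eq_bigr do rewrite !big_split /=.
rewrite !big_split /= !sum_sqr_frob_diag !sum_const !sqr_frob !mulr_sumr /= -!big_split.
by apply: eq_bigr => d _.
Qed.

Definition imbalance D (U : 'M[R]_(N1, D)) (V : 'M[R]_(N3, D))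
    (Rt : 'M[R]_(J, D)) (Tt : 'M[R]_(L, D)) d : R :=
  (frob (col d U) * frob (col d Rt) * frob (col d Tt) - S * frob (col d V)) ^+ 2
  + (frob (col d V) * frob (col d Rt) * frob (col d Tt) - S * frob (col d U)) ^+ 2.

Lemma fact_objE D (U : 'M[R]_(N1, D)) (V : 'M[R]_(N3, D))
    (Rt : 'M[R]_(J, D)) (Tt : 'M[R]_(L, D)) :
  fact_obj U V Rt Tt = cost (CPD U Rt V Tt) + (4 * S)^-1 * \sum_d imbalance U V Rt Tt d.
Proof.
(* For J L = 0 both sides vanish, as (4 * S)^-1 is then 0. *)
have [S0|S_neq0] := eqVneq S 0.
  have JL0 : (J * L = 0)%N by apply/eqP; rewrite -sqrtJL_eq0 S0.
  by rewrite /fact_obj /cost S0 mulr0 invr0 !mul0r addr0 big1 // => d _; apply: weight_JL0.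
have S4_neq0 : 4 * S != 0 by rewrite mulf_neq0 ?pnatr_eq0.
rewrite fact_obj_colnorms -[cost _](mulKf S4_neq0) -mulrDr; congr (_ * _).
rewrite /cost mulr_sumr -big_split; apply: eq_bigr => d _.
have JLE : (J * L)%:R = S ^+ 2 by rewrite sqr_sqrtr ?ler0n.
rewrite /imbalance /weight /= -!sqr_frob_col; set s := S in JLE *; rewrite JLE; ring.
Qed.

Lemma imbalance_ge0 D (U : 'M[R]_(N1, D)) (V : 'M[R]_(N3, D)) Rt Tt d :
  0 <= imbalance U V Rt Tt d.
Proof. by rewrite addr_ge0 ?sqr_ge0. Qed.

Lemma cost_le_fact_obj D (U : 'M[R]_(N1, D)) (V : 'M[R]_(N3, D))
    (Rt : 'M[R]_(J, D)) (Tt : 'M[R]_(L, D)) :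
  cost (CPD U Rt V Tt) <= fact_obj U V Rt Tt.
Proof.
rewrite fact_objE lerDl mulr_ge0 ?invr_ge0 ?mulr_ge0 ?sqrtr_ge0 //.
by apply: sumr_ge0 => d _; apply: imbalance_ge0.
Qed.

Lemma fact_obj_le_cost D (U : 'M[R]_(N1, D)) (V : 'M[R]_(N3, D))
    (Rt : 'M[R]_(J, D)) (Tt : 'M[R]_(L, D)) :
  fact_obj U V Rt Tt <= cost (CPD U Rt V Tt) -> forall d,
    frob (col d U) * frob (col d Rt) * frob (col d Tt) = S * frob (col d V) /\
    frob (col d V) * frob (col d Rt) * frob (col d Tt) = S * frob (col d U).
Proof.
move=> obj_le d; have [S0|S_neq0] := eqVneq S 0.
  have JL0 : (J * L = 0)%N by apply/eqP; rewrite -sqrtJL_eq0 S0.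
  by rewrite S0 -!mulrA (frob_col_mul_empty _ _ _ JL0) !mulr0 !mul0r.
have S4_gt0 : 0 < 4 * S by rewrite mulr_gt0 // lt_def S_neq0 sqrtr_ge0.
move: obj_le; rewrite fact_objE gerDl pmulr_rle0 ?invr_gt0 // => imb_le0.
have imb0 : \sum_d imbalance U V Rt Tt d = 0.
  by apply/eqP; rewrite eq_le imb_le0 sumr_ge0 // => e _; apply: imbalance_ge0.
move/eqP: (psumr_eq0P (fun e _ => imbalance_ge0 U V Rt Tt e) imb0 (i := d) isT).
by rewrite paddr_eq0 ?sqr_ge0 // !sqrf_eq0 !subr_eq0 => /andP[/eqP-> /eqP->].
Qed.

Lemma fact_of_decomp r (A : cpd r) : decomp A ->
  exists (U : 'M[R]_(N1, r)) (V : 'M[R]_(N3, r)) (Rt : 'M[R]_(J, r)) (Tt : 'M[R]_(L, r)),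
    is_fact X U V Rt Tt /\ fact_obj U V Rt Tt = cost A.
Proof.
move=> dA.
have S_gt0 s : weight A s != 0 -> 0 < S.
  move=> w_neq0; rewrite lt_def sqrtr_ge0 sqrtJL_eq0 andbT.
  by apply: contra w_neq0 => /eqP JL0; rewrite weight_JL0.
(* The columns of U and V get norm sqrt (w / S), those of Rt and Tt norm sqrt S:
   this makes every imbalance vanish. *)
pose a s := Num.sqrt (weight A s / S).
pose b s := if weight A s == 0 then 0 else Num.sqrt S.
have a_ge0 s : 0 <= a s by apply: sqrtr_ge0.
have b_ge0 s : 0 <= b s by rewrite /b; case: ifP => // _; apply: sqrtr_ge0.
have abw s : (a s * b s) ^+ 2 = weight A s.
  rewrite /b; case: eqP => [->|/eqP w_neq0]; first by rewrite mulr0 expr0n.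
  have S_pos := S_gt0 s w_neq0.
  by rewrite exprMn !sqr_sqrtr ?divr_ge0 ?weight_ge0 ?ltW // divfK ?gt_eqF.
have ab0 s : (a s == 0) = (b s == 0).
  rewrite /a /b; have [->|w_neq0] := eqVneq (weight A s) 0; first by rewrite mul0r sqrtr0 eqxx.
  have S_pos := S_gt0 s w_neq0.
  have w_pos : 0 < weight A s by rewrite lt_def w_neq0 weight_ge0.
  by rewrite !sqrtr_eq0 !leNgt divr_gt0 ?S_pos.
have [[U Rt V Tt] [dB costB normsB]] := decomp_rescale dA a_ge0 b_ge0 abw ab0.
exists U, V, Rt, Tt; split; first exact/is_factE.
rewrite fact_objE big1 ?mulr0 ?addr0 // => d _.
rewrite /imbalance; have /= [-> -> -> ->] := normsB d; rewrite /b.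
case: eqP => [w0|/eqP w_neq0].
  by rewrite /a w0 mul0r sqrtr0 !(mulr0, mul0r, subr0, expr0n, addr0).
by rewrite -mulrA -expr2 sqr_sqrtr ?sqrtr_ge0 // mulrC subrr expr0n addr0.
Qed.

Lemma decomp_reduce_step r (A : cpd r.+1) : (rk < r.+1)%N -> decomp A ->
  exists B : cpd r, decomp B /\ cost B <= cost A.
Proof.
move=> lt_rk dA.
pose M : 'M[R]_(r.+1, rk) :=
  \matrix_(s, e) (let t := enum_val e in cpd_term A s t.1.1.1 t.1.1.2 t.1.2 t.2).
have [v /rV0Pn v_neq0 vM0] := exists_left_kernel M lt_rk.
have dep i j k l : \sum_s v 0 s * cpd_term A s i j k l = 0.
  move/matrixP/(_ 0 (enum_rank (i, j, k, l))): vM0; rewrite !mxE => vM.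
  by rewrite -[RHS]vM; apply: eq_bigr => s _; rewrite mxE enum_rankK.
have [s0 [k0 [k_mu0 k_mu_le sum_ge0]]] := caratheodory_weights v_neq0 (weight_ge0 A).
(* Weighting the terms by 1 - k0 * v preserves the sum, as v is a linear relation
   between them; it kills term s0 and does not increase the cost. *)
pose A' := cpd_scale A (fun s => 1 - k0 * v 0 s) (fun=> 1) (fun=> 1) (fun=> 1).
have dA' : decomp A'.
  move=> i j k l; rewrite dA.
  have -> : \sum_s cpd_term A' s i j k l
            = \sum_s cpd_term A s i j k l - k0 * \sum_s v 0 s * cpd_term A s i j k l.
    by rewrite mulr_sumr -sumrB; apply: eq_bigr => s _; rewrite cpd_term_scale; ring.
  by rewrite dep mulr0 subr0.
have w0 : weight A' s0 = 0 by rewrite weight_scale k_mu0 subrr !mul0r normr0 mul0r.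
have [dB costB] := decomp_drop dA' w0.
exists (cpd_drop A' s0); split=> //; rewrite costB.
have -> : cost A' = cost A - k0 * \sum_s v 0 s * weight A s.
  rewrite /cost mulr_sumr -sumrB; apply: eq_bigr => s _.
  by rewrite weight_scale !mulr1 ger0_norm ?subr_ge0 //; ring.
by rewrite gerDl oppr_le0.
Qed.

Lemma decomp_reduce r (A : cpd r) : decomp A ->
  exists B : cpd rk, decomp B /\ cost B <= cost A.
Proof.
elim: r A => [|r IH] A dA.
  by have [dB costB] := decomp_pad (leq0n rk) dA; exists (cpd_pad rk A); rewrite costB.
case: (leqP r.+1 rk) => [le_rk|lt_rk].
  by have [dB costB] := decomp_pad le_rk dA; exists (cpd_pad rk A); rewrite costB.
have [B [dB le_BA]] := decomp_reduce_step lt_rk dA.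
have [C [dC le_CB]] := IH B dB; exists C; split=> //; exact: le_trans le_CB le_BA.
Qed.

Lemma decomp_reduce_bounded r (A : cpd r) : decomp A ->
  exists B : cpd rk, [/\ decomp B, cost B <= cost A & forall x, cpd_entry B x ^+ 4 <= cost B].
Proof.
move=> /decomp_reduce[B [dB le_BA]]; have [C [dC costC C_le]] := decomp_balance dB.
by exists C; split=> //; rewrite costC.
Qed.

(* Coordinates on decompositions of rank r, for which boxes are compact. *)
Definition cpd_of_rV r (W : 'rV[R]_#|{: slot r}|) : cpd r :=
  CPD (\matrix_(i, s) W ord0 (enum_rank (inl (inl (inl i)), s)))
      (\matrix_(j, s) W ord0 (enum_rank (inl (inl (inr j)), s)))
      (\matrix_(k, s) W ord0 (enum_rank (inl (inr k), s)))
      (\matrix_(l, s) W ord0 (enum_rank (inr l, s))).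

Definition rV_of_cpd r (A : cpd r) : 'rV[R]_#|{: slot r}| := \row_p cpd_entry A (enum_val p).

Lemma rV_of_cpdK r : cancel (@rV_of_cpd r) (@cpd_of_rV r).
Proof. by case=> A1 A2 A3 A4; congr CPD; apply/matrixP => i s; rewrite !mxE enum_rankK. Qed.

Lemma continuous_cp r :
  [/\ forall i s, continuous (fun W : 'rV[R]_#|{: slot r}| => cp1 (cpd_of_rV W) i s),
      forall j s, continuous (fun W : 'rV[R]_#|{: slot r}| => cp2 (cpd_of_rV W) j s),
      forall k s, continuous (fun W : 'rV[R]_#|{: slot r}| => cp3 (cpd_of_rV W) k s) &
      forall l s, continuous (fun W : 'rV[R]_#|{: slot r}| => cp4 (cpd_of_rV W) l s)].
Proof.
have coord (f : 'rV[R]_#|{: slot r}| -> R) x : (forall W, f W = W ord0 (enum_rank x)) ->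
    continuous f.
  by move=> fE; rewrite (funext fE); apply: coord_continuous.
by split=> i s; apply: coord => W; rewrite mxE.
Qed.

Lemma continuous_cost r : continuous (fun W : 'rV[R]_#|{: slot r}| => cost (cpd_of_rV W)).
Proof.
have [c1 c2 c3 c4] := continuous_cp r; apply: continuous_sum => s.
by do ![apply: continuous_mul]; apply: continuous_frob_col.
Qed.

Lemma closed_decomp r : closed [set W : 'rV[R]_#|{: slot r}| | decomp (cpd_of_rV W)].
Proof.
have [c1 c2 c3 c4] := continuous_cp r.
do 4!apply: closed_forall => ?; apply: closed_fun_eq; apply: continuous_sum => s.
by do ![apply: continuous_mul].
Qed.

Lemma nuc_norm_attained : exists A : cpd rk, decomp A /\ cost A = nuc_norm X.
Proof.
have [A0 dA0] := exists_decomp.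
have [B0 [dB0 _ B0_le]] := decomp_reduce_bounded dA0.
pose K := ([set W : 'rV[R]_#|{: slot rk}| |
              forall p, `[- (1 + cost B0), 1 + cost B0]%classic (W ord0 p)]
            `&` [set W | decomp (cpd_of_rV W)])%classic.
have inK (B : cpd rk) : decomp B -> (forall x, cpd_entry B x ^+ 4 <= cost B) ->
    cost B <= cost B0 -> K (rV_of_cpd B).
  move=> dB B_le le_B0; split; last by rewrite /= rV_of_cpdK.
  move=> p /=; rewrite mxE in_itv /= -ler_norml; apply: ler_norm_pow4.
  exact: le_trans (B_le _) le_B0.
have cK : compact K.
  apply: compact_closedI; last exact: closed_decomp.
  by apply: (@rV_compact _ _ (fun=> `[_, _]%classic)) => _; apply: segment_compact.
have cost_cont : {within K, continuous (fun W => cost (cpd_of_rV W))}%classic.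
  by apply: continuous_subspaceT; apply: continuous_cost.
have [W0 /set_mem[_ dW0] W0_min] :=
  EVT_min_rV (ex_intro _ _ (inK B0 dB0 B0_le (lexx _))) cK cost_cont.
have W0_le (B : cpd rk) : decomp B -> (forall x, cpd_entry B x ^+ 4 <= cost B) ->
    cost B <= cost B0 -> cost (cpd_of_rV W0) <= cost B.
  by move=> dB B_le le_B0; rewrite -(rV_of_cpdK B); apply: W0_min; apply: mem_set; apply: inK.
exists (cpd_of_rV W0); split=> //; apply/eqP; rewrite eq_le nuc_norm_le // andbT.
apply: nuc_norm_ge => r A dA; have [B [dB le_BA B_le]] := decomp_reduce_bounded dA.
apply: le_trans le_BA; have [le_B0|/ltW lt_B0] := lerP (cost B) (cost B0); first exact: W0_le.
exact: le_trans (W0_le _ dB0 B0_le (lexx _)) lt_B0.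
Qed.

End CPDecompositions.

Unset Implicit Arguments.
Theorem theorem2 (R : realType) (N1 J N3 L : nat) (X : tensor4 R N1 J N3 L) :
  (exists (D : nat) (U : 'M[R]_(N1, D)) (V : 'M[R]_(N3, D))
          (Rt : 'M[R]_(J, D)) (Tt : 'M[R]_(L, D)),
      is_fact X U V Rt Tt /\ fact_obj U V Rt Tt = nuc_norm X) /\
  (forall (D : nat) (U : 'M[R]_(N1, D)) (V : 'M[R]_(N3, D))
          (Rt : 'M[R]_(J, D)) (Tt : 'M[R]_(L, D)),
      is_fact X U V Rt Tt -> nuc_norm X <= fact_obj U V Rt Tt) /\
  (forall (D : nat) (U : 'M[R]_(N1, D)) (V : 'M[R]_(N3, D))
          (Rt : 'M[R]_(J, D)) (Tt : 'M[R]_(L, D)),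
      is_fact X U V Rt Tt -> fact_obj U V Rt Tt = nuc_norm X ->
      forall d : 'I_D,
        frob (col d U) * frob (col d Rt) * frob (col d Tt)
          = Num.sqrt ((J * L)%:R) * frob (col d V) /\
        frob (col d V) * frob (col d Rt) * frob (col d Tt)
          = Num.sqrt ((J * L)%:R) * frob (col d U)).
Proof.
split; [|split].
- have [A [dA <-]] := nuc_norm_attained X.
  have [U [V [Rt [Tt [fUV objE]]]]] := fact_of_decomp dA.
  by exists _, U, V, Rt, Tt.
- move=> D U V Rt Tt /is_factE dA.
  exact: le_trans (nuc_norm_le dA) (cost_le_fact_obj U V Rt Tt).
- move=> D U V Rt Tt /is_factE dA opt.
  by apply: fact_obj_le_cost; rewrite opt nuc_norm_le.
Qed.
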